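(* Consider the single-authority continuum model described in the context, where each $u_m$ is concave but possibly non-differentiable at finitely many points, and let $u_m^-$ denote the left derivative of $u_m$. Let $\mu^*$ denote the allocation implemented (in a given state $\omega$) by the generalized APM $A^*_m(y_m,s)\equiv h^{-1}\big(h(s)+u_m^-(y_m)\big)$. Then $\mu^*$ is an optimal allocation in state $\omega$.
   Context: An authority allocates a resource of measure $q\in(0,1)$ to agents with types $(s,m)\in[0,1]\times\mathcal M$ ($\mathcal M$ finite). A state $\omega$ is a type distribution with density $f_\omega$. Allocations are measurable $\mu:\Theta\to\{0,1\}$ allocating measure at most $q$. $h:[0,1]\to\mathbb R_+$ continuous strictly increasing, $\bar s_h(\mu,\omega)=\int\mu h\,dF_\omega$, $x_m(\mu,\omega)=\int_0^1\mu(s,m)f_\omega(s,m)ds$. Utility $\xi=g(\bar s_h+\sum_mu_m(x_m))$ with $g$ continuous strictly increasing; $h(0)+u_m^-(q)\ge0$ is not needed here but the authority always prefers to allocate the full resource. An allocation is optimal in $\omega$ if it maximizes $\xi$ over feasible allocations. An APM $A=\{A_m\}$ implements $\mu$ in state $\omega$ if (1) $\mu(\theta)=1$ iff for all $\theta'$ with $\mu(\theta')=0$, $A_{m(\theta)}(x_{m(\theta)}(\mu,\omega),s(\theta))>A_{m(\theta')}(x_{m(\theta')}(\mu,\omega),s(\theta'))$, and (2) $\sum_mx_m(\mu,\omega)=q$. (Since $A^*$ is monotone, it implements an essentially unique allocation.) *)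

From HB Require Import structures.
From mathcomp Require Import all_boot all_order all_algebra.
From mathcomp Require Import all_classical all_reals all_analysis.
Set Implicit Arguments. Unset Strict Implicit. Unset Printing Implicit Defensive.
Import Order.TTheory GRing.Theory Num.Theory.
Import numFieldNormedType.Exports.
Local Open Scope classical_set_scope.
Local Open Scope ring_scope.

Definition I01 {R : realType} : set R := [set x : R | 0 <= x <= 1].

Definition leftder {R : realType} (u : R -> R) (x : R) : R :=
  lim ((fun y => (u y - u x) / (y - x)) @ at_left x).

(* Concavity of u on the set D (assumed convex when used). *)
Definition concave_on {R : realType} (D : set R) (u : R -> R) : Prop :=
  forall x y t, D x -> D y -> 0 <= t <= 1 ->
    t * u x + (1 - t) * u y <= u (t * x + (1 - t) * y).

(* An allocation mu : M -> R -> bool, mu m s = true iff type (s,m) gets a unit.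
   x_m(mu, omega) = \int_0^1 mu(s,m) f_omega(s,m) ds. *)
Definition xm {R : realType} {M : finType} (f : M -> R -> R)
  (mu : M -> R -> bool) (m : M) : R :=
  Rintegral (@lebesgue_measure R) I01 (fun s => (mu m s)%:R * f m s).

Definition sbar {R : realType} {M : finType} (h : R -> R) (f : M -> R -> R)
  (mu : M -> R -> bool) : R :=
  \sum_(m : M) Rintegral (@lebesgue_measure R) I01
      (fun s => (mu m s)%:R * h s * f m s).

Definition xi {R : realType} {M : finType} (g h : R -> R) (u : M -> R -> R)
  (f : M -> R -> R) (mu : M -> R -> bool) : R :=
  g (sbar h f mu + \sum_(m : M) u m (xm f mu m)).

Definition feasible {R : realType} {M : finType} (q : R) (f : M -> R -> R)
  (mu : M -> R -> bool) : Prop :=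
  (forall m, measurable_fun I01 (fun s => (mu m s)%:R : R)) /\
  \sum_(m : M) xm f mu m <= q.

Definition optimal {R : realType} {M : finType} (q : R) (g h : R -> R)
  (u : M -> R -> R) (f : M -> R -> R) (mu : M -> R -> bool) : Prop :=
  feasible q f mu /\
  forall mu', feasible q f mu' -> xi g h u f mu' <= xi g h u f mu.

Definition implements {R : realType} {M : finType} (q : R)
  (A : M -> R -> R -> R) (f : M -> R -> R) (mu : M -> R -> bool) : Prop :=
  (forall m s, I01 s ->
     (mu m s <->
      (forall m' s', I01 s' -> mu m' s' = false ->
         A m' (xm f mu m') s' < A m (xm f mu m) s))) /\
  \sum_(m : M) xm f mu m = q.

Definition Astar {R : realType} {M : finType} (hinv h : R -> R)
  (u : M -> R -> R) : M -> R -> R -> R :=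
  fun m y s => hinv (h s + leftder (u m) y).

From HB Require Import structures.
From mathcomp Require Import all_boot all_order all_algebra.
From mathcomp Require Import all_classical all_reals all_analysis.
From mathcomp Require Import ring lra.
Set Implicit Arguments. Unset Strict Implicit. Unset Printing Implicit Defensive.
Import Order.TTheory GRing.Theory Num.Theory.
Import numFieldNormedType.Exports.
Local Open Scope classical_set_scope.
Local Open Scope ring_scope.

(* Lagrangian argument.  Let d_m be the left derivative of u_m at the quantity
   x*_m that mu* allocates in group m.  Since A* implements mu*, every allocated
   type has a larger index h(s) + d_m than every unallocated one, so some lam
   separates the two, and mu* maximizes sum_m \int mu (h + d_m - lam) f over all
   allocations.  Concavity gives u_m(y) <= u_m(x*_m) + d_m (y - x*_m), and for
   allocations of the full measure q we have
   sum_m d_m x_m = lam q + sum_m (d_m - lam) x_m, so sbar_h + sum_m u_m(x_m) never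
   exceeds its value at mu*.  As the authority prefers full allocations, these
   are the only competitors. *)

Section ConcaveSlopes.
Variables (R : realType) (u : R -> R) (lo hi : R).
Hypothesis u_concave : concave_on [set x | lo < x < hi] u.

Definition slope (a b : R) : R := (u b - u a) / (b - a).

Lemma slopeC a b : slope a b = slope b a.
Proof. by rewrite /slope -mulrNN -invrN !opprB. Qed.

Lemma concave_chord a b c : lo < a -> a < b -> b < c -> c < hi ->
  (c - b) * u a + (b - a) * u c <= (c - a) * u b.
Proof.
move=> lo_a ab bc c_hi.
have ca_neq0 : c - a != 0 by rewrite subr_eq0 gt_eqF // (lt_trans ab bc).
have ca_gt0 : 0 < c - a by rewrite subr_gt0 (lt_trans ab bc).
pose t := (c - b) / (c - a).
have t01 : 0 <= t <= 1.
  rewrite divr_ge0 ?ler_pdivrMr ?mul1r //=; lra.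
have lo_a_hi : lo < a < hi by apply/andP; split => //; lra.
have lo_c_hi : lo < c < hi by apply/andP; split => //; lra.
have := @u_concave a c t lo_a_hi lo_c_hi t01.
have -> : t * a + (1 - t) * c = b by rewrite /t; field.
have -> : t * u a + (1 - t) * u c = ((c - b) * u a + (b - a) * u c) / (c - a).
  by rewrite /t; field.
by rewrite ler_pdivrMr // mulrC [u b * _]mulrC.
Qed.

Lemma slope_le_left a b c : lo < a -> a < b -> b < c -> c < hi ->
  slope a c <= slope a b.
Proof.
move=> lo_a ab bc c_hi; have := concave_chord lo_a ab bc c_hi.
rewrite /slope ler_pdivrMr ?subr_gt0 ?(lt_trans ab bc) // mulrAC.
rewrite ler_pdivlMr ?subr_gt0 //; lra.
Qed.

Lemma slope_le_right a b c : lo < a -> a < b -> b < c -> c < hi ->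
  slope b c <= slope a c.
Proof.
move=> lo_a ab bc c_hi; have := concave_chord lo_a ab bc c_hi.
rewrite /slope ler_pdivrMr ?subr_gt0 ?(lt_trans ab bc) // mulrAC.
rewrite ler_pdivlMr ?subr_gt0 //; lra.
Qed.

Lemma slope_antitone x z w : lo < x -> x < hi -> lo < z -> z < w -> w < hi ->
  z != x -> w != x -> slope x w <= slope x z.
Proof.
move=> lo_x x_hi lo_z zw w_hi zx wx.
have [wx_lt|xw_le] := ltP w x.
  by rewrite (slopeC x w) (slopeC x z) (slope_le_right lo_z zw wx_lt).
have xw : x < w by rewrite lt_neqAle xw_le eq_sym wx.
have [zx_lt|xz_le] := ltP z x.
  rewrite (slopeC x z); apply: (@le_trans _ _ (slope z w)).
    exact: slope_le_right lo_z zx_lt xw w_hi.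
  exact: slope_le_left lo_z zx_lt xw w_hi.
have xz : x < z by rewrite lt_neqAle xz_le eq_sym zx.
exact: slope_le_left lo_x xz zw w_hi.
Qed.

Lemma cvg_slope_at_left x : lo < x -> x < hi -> cvg (slope x z @[z --> x^'-]).
Proof.
move=> lo_x x_hi; pose w := (x + hi) / 2.
have [xw w_hi] : x < w /\ w < hi by rewrite /w; split; lra.
rewrite -is_cvgNE; apply: nondecreasing_at_left_is_cvgr.
- near=> y => a b; rewrite !in_itv /= => /andP[ya ax] /andP[yb bx] ab.
  have lo_y : lo < y by near: y; exact: nbhs_left_gt.
  rewrite lerN2; move: ab; rewrite le_eqVlt => /predU1P[-> //|ab].
  by apply: slope_antitone; rewrite ?lt_eqF //; lra.
- near=> y; exists (- slope x w) => v [z /=]; rewrite in_itv /= => /andP[yz zx] <-.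
  have lo_y : lo < y by near: y; exact: nbhs_left_gt.
  by rewrite lerN2; apply: slope_antitone; rewrite ?(lt_eqF zx) ?(gt_eqF xw) //; lra.
Unshelve. all: by end_near.
Qed.

Lemma slope_le_leftder x w : lo < x -> x < w -> w < hi -> slope x w <= leftder u x.
Proof.
move=> lo_x xw w_hi; apply: limr_ge; first exact: cvg_slope_at_left lo_x (lt_trans xw w_hi).
near=> z.
have lo_z : lo < z by near: z; exact: nbhs_left_gt.
have zx : z < x by near: z; exact: nbhs_left_lt.
by apply: slope_antitone; rewrite ?(lt_eqF zx) ?(gt_eqF xw) //; lra.
Unshelve. all: by end_near.
Qed.

Lemma leftder_le_slope x z : lo < z -> z < x -> x < hi -> leftder u x <= slope x z.
Proof.
move=> lo_z zx x_hi; apply: limr_le; first exact: cvg_slope_at_left (lt_trans lo_z zx) x_hi.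
near=> y.
have zy : z < y by near: y; exact: nbhs_left_gt.
have yx : y < x by near: y; exact: nbhs_left_lt.
by apply: slope_antitone; rewrite ?lt_eqF //; lra.
Unshelve. all: by end_near.
Qed.

Lemma concave_le_leftder_tangent x y : lo < x < hi -> lo < y < hi ->
  u y <= u x + leftder u x * (y - x).
Proof.
move=> /andP[lo_x x_hi] /andP[lo_y y_hi].
have [yx|xy|->] := ltgtP y x; last by rewrite subrr mulr0 addr0.
- have := leftder_le_slope lo_y yx x_hi.
  by rewrite /slope ler_ndivlMr ?subr_lt0 // -lerBlDl mulrC.
- have := slope_le_leftder lo_x xy y_hi.
  by rewrite /slope ler_pdivrMr ?subr_gt0 // -lerBlDl mulrC.
Qed.
End ConcaveSlopes.

Lemma I01_itv (R : realType) : (I01 : set R) = `[0, 1]%classic.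
Proof. by apply/seteqP; split => x; rewrite /I01 /= in_itv. Qed.

Lemma measurable_I01 (R : realType) : measurable (I01 : set (measurableTypeR R)).
Proof. by rewrite I01_itv; exact: measurable_itv. Qed.
#[local] Hint Resolve measurable_I01 : core.

Lemma integrable_bounded_mul (R : realType) (D : set (measurableTypeR R))
  (F phi : R -> R) (C : R) :
  measurable D -> (@lebesgue_measure R).-integrable D (EFin \o F) ->
  measurable_fun D phi -> (forall s, D s -> `|phi s| <= C) ->
  (@lebesgue_measure R).-integrable D (EFin \o (fun s => phi s * F s)).
Proof.
move=> mD F_int phi_meas phi_le.
have phi_bounded : [bounded phi x | x in D].
  exists C; split; first exact: num_real.
  by move=> B CB x Dx; apply: le_trans (phi_le x Dx) (ltW CB).
have := @integrableMr _ (measurableTypeR R) R _ D mD phi _ phi_meas phi_bounded F_int.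
by apply: eq_integrable => // x _ /=; rewrite EFinM.
Qed.

Section Allocations.
Variables (R : realType) (M : finType) (h : R -> R) (f : M -> R -> R) (C : R).
Hypotheses (h_meas : measurable_fun I01 h) (h_le : forall s, I01 s -> `|h s| <= C)
  (f_ge0 : forall m s, 0 <= f m s)
  (f_int : forall m, (@lebesgue_measure R).-integrable I01 (EFin \o f m)).

Definition measurable_allocation (mu : M -> R -> bool) : Prop :=
  forall m, measurable_fun I01 (fun s => (mu m s)%:R : R).

Definition weighted_mass (mu : M -> R -> bool) (c : M -> R) : R :=
  \sum_(m : M) Rintegral (@lebesgue_measure R) I01
    (fun s => (mu m s)%:R * (h s + c m) * f m s).

Lemma integrable_allocated (mu : M -> R -> bool) m (phi : R -> R) (B : R) :
  measurable_allocation mu -> measurable_fun I01 phi ->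
  (forall s, I01 s -> `|phi s| <= B) ->
  (@lebesgue_measure R).-integrable I01
    (EFin \o (fun s => (mu m s)%:R * phi s * f m s)).
Proof.
move=> mu_meas phi_meas phi_le.
apply: (integrable_bounded_mul (C := B) (@measurable_I01 R) (f_int m)).
  exact: measurable_realfun.measurable_funM (mu_meas m) phi_meas.
move=> s Is; case: (mu m s); rewrite ?mul1r ?mul0r ?normr0 ?phi_le //.
exact: le_trans (normr_ge0 _) (phi_le s Is).
Qed.

Lemma xm_ge0 (mu : M -> R -> bool) m : 0 <= xm f mu m.
Proof. by apply: Rintegral_ge0 => s _; rewrite mulr_ge0. Qed.

Lemma xm_le_sum (mu : M -> R -> bool) m : xm f mu m <= \sum_(m' : M) xm f mu m'.
Proof. by rewrite (bigD1 m) //= lerDl sumr_ge0 // => m' _; exact: xm_ge0. Qed.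

Lemma xm_unallocated (mu : M -> R -> bool) m :
  (forall s, I01 s -> ~~ mu m s) -> xm f mu m = 0.
Proof.
move=> not_mu; rewrite /xm (@eq_Rintegral _ _ _ _ _ (fun=> 0)).
  by rewrite Rintegral_cst // mul0r.
by move=> s; rewrite inE => Is; rewrite (negbTE (not_mu s Is)) mul0r.
Qed.

Lemma xm_allocated (mu : M -> R -> bool) m :
  (forall s, I01 s -> mu m s) -> xm f mu m = Rintegral (@lebesgue_measure R) I01 (f m).
Proof.
by move=> all_mu; apply: eq_Rintegral => s; rewrite inE => Is; rewrite all_mu // mul1r.
Qed.

Lemma exists_allocated (mu : M -> R -> bool) :
  \sum_(m : M) xm f mu m != 0 -> exists m s, I01 s /\ mu m s.
Proof.
move=> /eqP sum_neq0; apply: contrapT => no_alloc; apply: sum_neq0.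
apply: big1 => m _; apply: xm_unallocated => s Is; apply/negP => mu_ms.
by apply: no_alloc; exists m, s.
Qed.

Lemma exists_unallocated (mu : M -> R -> bool) :
  \sum_(m : M) xm f mu m != \sum_(m : M) Rintegral (@lebesgue_measure R) I01 (f m) ->
  exists m s, I01 s /\ ~~ mu m s.
Proof.
move=> /eqP sum_neq; apply: contrapT => all_alloc; apply: sum_neq.
apply: eq_bigr => m _; apply: xm_allocated => s Is; apply: contrapT => /negP mu_ms.
by apply: all_alloc; exists m, s.
Qed.

Lemma sbar_add_weighted_xm (mu : M -> R -> bool) (c : M -> R) :
  measurable_allocation mu ->
  sbar h f mu + \sum_(m : M) c m * xm f mu m = weighted_mass mu c.
Proof.
move=> mu_meas; rewrite /sbar /weighted_mass -big_split; apply: eq_bigr => m _ /=.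
have cst_meas (a : R) : measurable_fun (I01 : set R) (fun=> a) by exact: measurable_cst.
have cst_le (a : R) (s : R) : I01 s -> `|a| <= `|a| by [].
have int_h := integrable_allocated m mu_meas h_meas h_le.
have int_1 : (@lebesgue_measure R).-integrable I01
    (EFin \o (fun s => (mu m s)%:R * f m s)).
  apply: eq_integrable (integrable_allocated m mu_meas (cst_meas 1) (cst_le 1)) => //.
  by move=> s _ /=; rewrite mulr1.
have int_c : (@lebesgue_measure R).-integrable I01
    (EFin \o (fun s => c m * ((mu m s)%:R * f m s))).
  apply: eq_integrable (integrable_allocated m mu_meas (cst_meas (c m)) (cst_le (c m))) => //.
  by move=> s _ /=; rewrite mulrCA mulrA.
rewrite /xm -(RintegralZl (c m) (@measurable_I01 R) int_1).
rewrite -(RintegralD (@measurable_I01 R) int_h int_c).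
by apply: eq_Rintegral => s _; ring.
Qed.

Lemma weighted_mass_le_threshold (mu nu : M -> R -> bool) (c : M -> R) :
  measurable_allocation mu -> measurable_allocation nu ->
  (forall m s, I01 s -> mu m s -> 0 <= h s + c m) ->
  (forall m s, I01 s -> ~~ mu m s -> h s + c m <= 0) ->
  weighted_mass nu c <= weighted_mass mu c.
Proof.
move=> mu_meas nu_meas mu_ge0 not_mu_le0; apply: ler_sum => m _.
have hc_meas : measurable_fun I01 (fun s => h s + c m).
  by apply: measurable_realfun.measurable_funD => //; exact: measurable_cst.
have hc_le s : I01 s -> `|h s + c m| <= C + `|c m|.
  by move=> Is; apply: le_trans (ler_normD _ _) _; rewrite lerD2r h_le.
apply: le_Rintegral => //.
- exact: (integrable_allocated m nu_meas hc_meas hc_le).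
- exact: (integrable_allocated m mu_meas hc_meas hc_le).
move=> s Is; apply: (ler_wpM2r (f_ge0 m s)).
case mu_ms: (mu m s); case: (nu m s); rewrite ?mul1r ?mul0r //.
- exact: mu_ge0 Is (mu_ms : mu m s).
- by apply: not_mu_le0 Is _; rewrite mu_ms.
Qed.

Lemma full_allocation_lagrangian (mu : M -> R -> bool) (q lam : R) (d : M -> R) :
  measurable_allocation mu -> \sum_(m : M) xm f mu m = q ->
  sbar h f mu + \sum_(m : M) d m * xm f mu m
    = weighted_mass mu (fun m => d m - lam) + lam * q.
Proof.
move=> mu_meas mu_full; rewrite -sbar_add_weighted_xm // -addrA; congr (_ + _).
by rewrite -mu_full mulr_sumr -big_split; apply: eq_bigr => m _ /=; rewrite -mulrDl subrK.
Qed.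

Variables (u : M -> R -> R) (lo hi q : R).
Hypotheses (u_concave : forall m, concave_on [set x | lo < x < hi] (u m))
  (lo_lt0 : lo < 0) (q_lt_hi : q < hi).

Lemma full_xm_in_domain (mu : M -> R -> bool) m :
  \sum_(m' : M) xm f mu m' = q -> lo < xm f mu m < hi.
Proof.
move=> mu_full; rewrite (lt_le_trans lo_lt0 (xm_ge0 _ _)) /=.
by rewrite (le_lt_trans _ q_lt_hi) // -mu_full xm_le_sum.
Qed.

Lemma threshold_allocation_optimal (mu nu : M -> R -> bool) (lam : R) :
  measurable_allocation mu -> measurable_allocation nu ->
  \sum_(m : M) xm f mu m = q -> \sum_(m : M) xm f nu m = q ->
  (forall m s, I01 s -> mu m s -> 0 <= h s + (leftder (u m) (xm f mu m) - lam)) ->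
  (forall m s, I01 s -> ~~ mu m s -> h s + (leftder (u m) (xm f mu m) - lam) <= 0) ->
  sbar h f nu + \sum_(m : M) u m (xm f nu m) <= sbar h f mu + \sum_(m : M) u m (xm f mu m).
Proof.
move=> mu_meas nu_meas mu_full nu_full mu_ge0 not_mu_le0.
pose d m := leftder (u m) (xm f mu m).
pose K := \sum_(m : M) (u m (xm f mu m) - d m * xm f mu m).
have tangent : \sum_(m : M) u m (xm f nu m) <= \sum_(m : M) d m * xm f nu m + K.
  rewrite -big_split /=; apply: ler_sum => m _.
  have := concave_le_leftder_tangent (u_concave m)
    (full_xm_in_domain m mu_full) (full_xm_in_domain m nu_full).
  by rewrite -/(d m); lra.
have -> : \sum_(m : M) u m (xm f mu m) = \sum_(m : M) d m * xm f mu m + K.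
  by rewrite -big_split; apply: eq_bigr => m _ /=; rewrite addrC subrK.
rewrite addrA (full_allocation_lagrangian lam d mu_meas mu_full).
apply: (le_trans (_ : _ <= sbar h f nu + \sum_(m : M) d m * xm f nu m + K)).
  by rewrite -addrA lerD2l.
rewrite (full_allocation_lagrangian lam d nu_meas nu_full) !lerD2r.
exact: weighted_mass_le_threshold.
Qed.

End Allocations.

Lemma separating_threshold (R : realType) (A B : set R) :
  A !=set0 -> B !=set0 -> (forall a b, A a -> B b -> a <= b) ->
  exists lam, ubound A lam /\ lbound B lam.
Proof.
move=> [a Aa] [b Bb] A_le_B.
have supA : has_sup A by split; [exists a | exists b => x Ax; exact: A_le_B].
exists (sup A); split; first exact: sup_upper_bound.
by move=> y By; apply: ge_sup; [exists a | move=> x Ax; exact: A_le_B].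
Qed.

Section AstarImplementation.
Variables (R : realType) (M : finType) (q : R) (hinv h : R -> R) (u : M -> R -> R).
Variables (f : M -> R -> R) (mu : M -> R -> bool).
Hypotheses (hinv_incr : {homo hinv : a b / a < b})
  (mu_impl : implements q (Astar hinv h u) f mu).

Let d m := leftder (u m) (xm f mu m).

Lemma Astar_unallocated_le_allocated m s m' s' :
  I01 s -> I01 s' -> mu m s -> ~~ mu m' s' -> h s' + d m' <= h s + d m.
Proof.
move=> Is Is' mu_ms mu_ms'.
have := (mu_impl.1 m s Is).1 mu_ms m' s' Is' (negbTE mu_ms').
by rewrite /Astar leNgt => A_lt; apply/negP => /hinv_incr; rewrite ltNge (ltW A_lt).
Qed.

Lemma Astar_threshold : 0 < q < 1 ->
  \sum_(m : M) Rintegral (@lebesgue_measure R) I01 (f m) = 1 ->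
  exists lam, (forall m s, I01 s -> mu m s -> 0 <= h s + (d m - lam)) /\
              (forall m s, I01 s -> ~~ mu m s -> h s + (d m - lam) <= 0).
Proof.
move=> /andP[q_gt0 q_lt1] f_mass; have mu_full := mu_impl.2.
have [|m1 [s1 [Is1 mu1]]] := exists_allocated (f := f) (mu := mu).
  by rewrite mu_full gt_eqF.
have [|m0 [s0 [Is0 mu0]]] := exists_unallocated (f := f) (mu := mu).
  by rewrite mu_full f_mass lt_eqF.
pose unallocated := [set v | exists m s, [/\ I01 s, ~~ mu m s & v = h s + d m]].
pose allocated := [set v | exists m s, [/\ I01 s, mu m s & v = h s + d m]].
have [lam [lam_ub lam_lb]] : exists lam, ubound unallocated lam /\ lbound allocated lam.
  apply: separating_threshold.
  - by exists (h s0 + d m0), m0, s0.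
  - by exists (h s1 + d m1), m1, s1.
  - move=> _ _ [m' [s' [Is' mu' ->]]] [m [s [Is mu_ms ->]]].
    exact: Astar_unallocated_le_allocated.
exists lam; split => m s Is mu_ms; rewrite addrA ?subr_ge0 ?subr_le0.
- by apply: lam_lb; exists m, s.
- by apply: lam_ub; exists m, s.
Qed.

End AstarImplementation.

Theorem proposition10 (R : realType) (M : finType) (q : R)
  (h hinv g : R -> R) (u : M -> R -> R) (lo hi : R)
  (f : M -> R -> R) (mustar : M -> R -> bool) :
  0 < q < 1 ->
  (* h : [0,1] -> R_+ continuous, strictly increasing *)
  {within I01, continuous h} ->
  (forall s, I01 s -> 0 <= h s) ->
  {in I01 &, forall s s', s < s' -> h s < h s'} ->
  (* h^{-1}: a strictly increasing function inverting h on [0,1] *)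
  (forall a b : R, a < b -> hinv a < hinv b) ->
  (forall s, I01 s -> hinv (h s) = s) ->
  (* g continuous strictly increasing *)
  continuous g ->
  (forall a b : R, a < b -> g a < g b) ->
  (* u_m concave on an open interval containing [0,1], differentiable
     except at finitely many points *)
  lo < 0 -> 1 < hi ->
  (forall m, concave_on [set x | lo < x < hi] (u m)) ->
  (forall m, finite_set [set x | lo < x < hi /\ ~ derivable (u m) x 1]) ->
  (* state omega: a type distribution with density f *)
  (forall m, measurable_fun I01 (f m)) ->
  (forall m s, 0 <= f m s) ->
  (forall m, (@lebesgue_measure R).-integrable I01 (EFin \o f m)) ->
  \sum_(m : M) Rintegral (@lebesgue_measure R) I01 (f m) = 1 ->
  (* the authority always prefers to allocate the full resource *)
  (forall mu, feasible q f mu -> exists mu', feasible q f mu' /\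
      \sum_(m : M) xm f mu' m = q /\ xi g h u f mu <= xi g h u f mu') ->
  (* mustar is the allocation implemented by the generalized APM A* *)
  (forall m, measurable_fun I01 (fun s => (mustar m s)%:R : R)) ->
  implements q (Astar hinv h u) f mustar ->
  optimal q g h u f mustar.
Proof.
move=> q01 h_cont h_ge0 h_incr hinv_incr _ _ g_incr lo_lt0 hi_gt1 u_concave _ _
  f_ge0 f_int f_mass full mustar_meas mustar_impl.
have h_meas : measurable_fun I01 h.
  exact: measurable_realfun.subspace_continuous_measurable_fun (@measurable_I01 R) h_cont.
have h_le s : I01 s -> `|h s| <= h 1.
  move=> /[dup] Is /andP[_]; rewrite ger0_norm ?h_ge0 // le_eqVlt.
  case/predU1P=> [-> //|s_lt1]; apply/ltW/h_incr; rewrite ?inE //.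
  by rewrite /I01 /= ler01 lexx.
have [lam [alloc_ge0 unalloc_le0]] := Astar_threshold hinv_incr mustar_impl q01 f_mass.
have mustar_full := mustar_impl.2.
have q_lt_hi : q < hi by case/andP: q01 => _ q_lt1; exact: lt_trans q_lt1 hi_gt1.
split=> [|mu /full [nu [[nu_meas _] [nu_full nu_better]]]].
  by split=> //; rewrite mustar_full.
apply: le_trans nu_better _; rewrite /xi; apply: (ltW_homo g_incr).
exact: (threshold_allocation_optimal h_meas h_le f_ge0 f_int u_concave lo_lt0 q_lt_hi
  mustar_meas nu_meas mustar_full nu_full alloc_ge0 unalloc_le0).
Qed.
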